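(* Let $Q(x,u,v,y;\alpha,\beta)$ be affine-linear in each of $x,u,v,y$ and satisfy $Q(x,u,v,y;\alpha,\beta)=\varepsilon Q(x,v,u,y;\beta,\alpha)=\sigma Q(u,x,y,v;\alpha,\beta)$ with $\varepsilon,\sigma\in\{\pm1\}$. Define $g(x,u;\alpha,\beta)=QQ_{yv}-Q_yQ_v$ (evaluated at $Q=Q(x,u,v,y;\alpha,\beta)$; it is a biquadratic polynomial in $x,u$ independent of $v,y$). Then also $g(x,v;\beta,\alpha)=QQ_{yu}-Q_yQ_u$, and $g(x,u;\alpha,\beta)=g(u,x;\alpha,\beta)$. Moreover, let $f_1,f_2,f_3$ be defined by: $x_{23}=f_1(x,x_2,x_3)$ is the solution of $Q(x,x_2,x_3,x_{23};\alpha_2,\alpha_3)=0$, $x_{31}=f_2(x,x_3,x_1)$ the solution of $Q(x,x_3,x_1,x_{31};\alpha_3,\alpha_1)=0$, $x_{12}=f_3(x,x_1,x_2)$ the solution of $Q(x,x_1,x_2,x_{12};\alpha_1,\alpha_2)=0$. Then the identity $f_{3,x_2}f_{2,x_1}f_{1,x_3}=-f_{3,x_1}f_{2,x_3}f_{1,x_2}$ (notation as in the context) is equivalent to the identity $$g(x,x_1;\alpha_1,\alpha_2)g(x,x_2;\alpha_2,\alpha_3)g(x,x_3;\alpha_3,\alpha_1)=-g(x,x_1;\alpha_1,\alpha_3)g(x,x_2;\alpha_2,\alpha_1)g(x,x_3;\alpha_3,\alpha_2).$$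
   Context: $Q_y$, $Q_{yv}$ etc. denote partial derivatives of $Q$ with respect to the indicated variables. $f_{3,x_j}$ denotes the partial derivative of $f_3$ with respect to the argument occupied by $x_j$ in $f_3(x,x_1,x_2)$; similarly $f_{2,x_j}$ refers to $f_2(x,x_3,x_1)$ and $f_{1,x_j}$ to $f_1(x,x_2,x_3)$. *)

From HB Require Import structures.
From mathcomp Require Import all_boot all_order all_algebra.
From mathcomp Require Import all_classical all_reals all_analysis.
Set Implicit Arguments. Unset Strict Implicit. Unset Printing Implicit Defensive.
Import Order.TTheory GRing.Theory Num.Theory.
Local Open Scope ring_scope.

Section Defs.
Variable R : realType.

(* Q(x,u,v,y;alpha,beta), arguments in this order *)
Definition Qfun := R -> R -> R -> R -> R -> R -> R.

Definition affine (f : R -> R) : Prop := exists a b : R, forall t, f t = a + b * t.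

Definition multiaffine (Q : Qfun) : Prop :=
  forall x u v y al be,
    [/\ affine (fun t => Q t u v y al be), affine (fun t => Q x t v y al be),
        affine (fun t => Q x u t y al be) & affine (fun t => Q x u v t al be)].

Definition Q_y (Q : Qfun) x u v y al be := derive1 (fun t => Q x u v t al be) y.
Definition Q_u (Q : Qfun) x u v y al be := derive1 (fun t => Q x t v y al be) u.
Definition Q_v (Q : Qfun) x u v y al be := derive1 (fun t => Q x u t y al be) v.
Definition Q_yv (Q : Qfun) x u v y al be := derive1 (fun t => Q_y Q x u t y al be) v.
Definition Q_yu (Q : Qfun) x u v y al be := derive1 (fun t => Q_y Q x t v y al be) u.

Definition gexpr (Q : Qfun) x u v y al be :=
  Q x u v y al be * Q_yv Q x u v y al be - Q_y Q x u v y al be * Q_v Q x u v y al be.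
Definition gexpr_u (Q : Qfun) x u v y al be :=
  Q x u v y al be * Q_yu Q x u v y al be - Q_y Q x u v y al be * Q_u Q x u v y al be.

(* g(x,u;al,be): gexpr is independent of v,y (part of the theorem); we
   evaluate it at v = y = 0 *)
Definition g (Q : Qfun) x u al be := gexpr Q x u 0 0 al be.

End Defs.

(* For a multiaffine [Q], write [Q = a + b v + c y + d v y] as a function of [(v, y)];
   then [Q Q_yv - Q_y Q_v = a d - b c] does not depend on [(v, y)], and the symmetries
   of [Q] transport this determinant between the variables.  Implicit differentiation of
   the root [y = - (a + b v) / (c + d v)] gives [f_v = g / Q_y^2], so where the three
   [Q_y] do not vanish the derivative identity is the [g] identity multiplied by a
   nonzero factor.  Both sides of the [g] identity and the [Q_y] restrict to
   polynomials on every line, so the [g] identity holding off the zero set of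
   [Q_y1 Q_y2 Q_y3] holds everywhere, unless some [Q_y] vanishes identically; but then
   [Q] does not depend on [y], the corresponding [g]'s vanish, and both sides are 0. *)

From HB Require Import structures.
From mathcomp Require Import all_boot all_order all_algebra.
From mathcomp Require Import all_classical all_reals all_analysis.
From mathcomp Require Import ring.

Set Implicit Arguments.
Unset Strict Implicit.
Unset Printing Implicit Defensive.

Import Order.TTheory GRing.Theory Num.Theory numFieldNormedType.Exports.
Local Open Scope ring_scope.

Section AffineCalculus.
Variable R : realType.
Implicit Types (f : R -> R) (h : R -> R -> R).

Lemma affineE f : affine f -> forall t, f t = f 0 + t * (f 1 - f 0).
Proof. by case=> a [b fE] t; rewrite !fE; ring. Qed.

Lemma is_derive_affine (a b t0 : R) : is_derive t0 1 (fun t : R => a + b * t) b.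
Proof. by apply: is_derive_eq; rewrite add0r mul1r [_%:A]mulr1. Qed.

Lemma derive1_affine f : affine f -> forall t, derive1 f t = f 1 - f 0.
Proof.
move=> /affineE fE t.
have -> : derive1 f t = derive1 (fun s => f 0 + (f 1 - f 0) * s) t.
  by congr derive1; apply/funext => s; rewrite fE mulrC.
by rewrite derive1E (derive_val (is_derive := is_derive_affine _ _ _)).
Qed.

Lemma derive1_affine_ratio (a b c d t0 : R) : c + d * t0 != 0 ->
  derive1 (fun t => (a + b * t) / (c + d * t)) t0 = (b * c - a * d) / (c + d * t0) ^+ 2.
Proof.
move=> nz.
have D := is_deriveM (is_derive_affine a b t0)
  (@is_deriveV R (fun t => c + d * t) t0 _ 1 nz (is_derive_affine c d t0)).
rewrite derive1E (derive_val (is_derive := D)) /GRing.scale /=.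
by field.
Qed.

Lemma near_affine_neq0 (c d t0 : R) : c + d * t0 != 0 ->
  \forall t \near t0, c + d * t != 0.
Proof.
move=> nz; have cont : {for t0, continuous (fun t : R => c + d * t)}.
  by apply: cvgD; [exact: cvg_cst | apply: cvgM; [exact: cvg_cst | exact: cvg_id]].
exact: (cvgr_neq0 _ cont nz).
Qed.

Definition biaffine h := (forall s, affine (h^~ s)) /\ (forall t, affine (h t)).

Lemma biaffineP h : biaffine h ->
  exists a b c d : R, forall t s, h t s = a + b * t + s * (c + d * t).
Proof.
case=> affine_t affine_s; exists (h 0 0), (h 1 0 - h 0 0), (h 0 1 - h 0 0).
exists (h 1 1 - h 1 0 - h 0 1 + h 0 0) => t s.
rewrite (affineE (affine_s t)) (affineE (affine_t 0) t) (affineE (affine_t 1) t); ring.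
Qed.

(* For [h t s = a + b t + c s + d t s] this is [a d - b c = h h_ts - h_t h_s]. *)
Definition bilin_det h :=
  h 0 0 * (h 1 1 - h 1 0 - h 0 1 + h 0 0) - (h 0 1 - h 0 0) * (h 1 0 - h 0 0).

Lemma derive1_implicit_biaffine h (F : R -> R) t0 : biaffine h ->
  (forall t, h t 1 - h t 0 != 0 -> h t (F t) = 0) -> h t0 1 - h t0 0 != 0 ->
  derive1 F t0 = bilin_det h / (h t0 1 - h t0 0) ^+ 2.
Proof.
case/biaffineP=> a [b [c [d hE]]] root_F nz.
have slopeE t : h t 1 - h t 0 = c + d * t by rewrite !hE; ring.
have F_near : \forall t \near t0, (fun t => (- a + - b * t) / (c + d * t)) t = F t.
  near=> t; have nz_t : c + d * t != 0 by near: t; apply: near_affine_neq0; rewrite -slopeE.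
  have := root_F t; rewrite slopeE hE => /(_ nz_t) root_t.
  apply: (mulIf nz_t); rewrite divfK // -[LHS]addr0 -root_t; ring.
rewrite derive1E -(near_eq_derive _ F_near) -derive1E derive1_affine_ratio -?slopeE //.
by rewrite /bilin_det !hE; congr (_ / _); ring.
Unshelve. all: by end_near.
Qed.

End AffineCalculus.

Section PolynomialFunctions.
Variable R : realType.
Implicit Types f l : R -> R.

Definition poly_fun f := exists p, f =1 horner p.

Lemma poly_fun_cst (c : R) : poly_fun (fun=> c).
Proof. by exists c%:P => s; rewrite hornerC. Qed.

Lemma poly_fun_id : poly_fun id.
Proof. by exists 'X => s; rewrite hornerX. Qed.

Lemma poly_funD f l : poly_fun f -> poly_fun l -> poly_fun (fun s => f s + l s).
Proof. by move=> [p fE] [q lE]; exists (p + q) => s; rewrite hornerD fE lE. Qed.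

Lemma poly_funB f l : poly_fun f -> poly_fun l -> poly_fun (fun s => f s - l s).
Proof. by move=> [p fE] [q lE]; exists (p - q) => s; rewrite hornerD hornerN fE lE. Qed.

Lemma poly_funM f l : poly_fun f -> poly_fun l -> poly_fun (fun s => f s * l s).
Proof. by move=> [p fE] [q lE]; exists (p * q) => s; rewrite hornerM fE lE. Qed.

Lemma poly_fun_affine_subst (k : R -> R -> R) l : (forall s, affine (k s)) ->
  poly_fun (k^~ 0) -> poly_fun (k^~ 1) -> poly_fun l -> poly_fun (fun s => k s (l s)).
Proof.
move=> k_aff k0 k1 pl; have kE s : k s (l s) = k s 0 + l s * (k s 1 - k s 0).
  exact: affineE (k_aff s) (l s).
have [p pE] := poly_funD k0 (poly_funM pl (poly_funB k1 k0)).
by exists p => s; rewrite kE pE.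
Qed.

Lemma poly_eq0_of_horner0 (p : {poly R}) : horner p =1 0 -> p = 0.
Proof.
move=> p0; apply: (@roots_geq_poly_eq0 _ p [seq i%:R | i <- iota 0 (size p)]).
- by apply/allP => _ /mapP[i _ ->]; apply/rootP.
- by rewrite map_inj_uniq ?iota_uniq //; apply: mulrIn; rewrite oner_eq0.
- by rewrite size_map size_iota.
Qed.

Lemma poly_fun_mulIf f l (s0 : R) : poly_fun f -> poly_fun l -> l s0 != 0 ->
  (forall s, f s * l s = 0) -> f =1 0.
Proof.
move=> [p fE] [q lE] ls0 fl0 s.
have q_neq0 : q != 0 by apply: contraNneq ls0 => q0; rewrite lE q0 horner0.
have /eqP : p * q = 0 by apply: poly_eq0_of_horner0 => t; rewrite hornerM -fE -lE fl0.
by rewrite mulf_eq0 (negPf q_neq0) orbF => /eqP p0; rewrite fE p0 horner0.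
Qed.

Variable V : lmodType R.
Implicit Types (F G : V -> R) (p w : V).

Definition poly_on_lines F := forall p w : V, poly_fun (fun s => F (p + s *: w)).

Lemma poly_on_lines_eq F G : F =1 G -> poly_on_lines G -> poly_on_lines F.
Proof. by move=> FG PG p w; have [q qE] := PG p w; exists q => s; rewrite FG qE. Qed.

Lemma poly_on_lines_cst (c : R) : poly_on_lines (fun=> c).
Proof. by move=> p w; apply: poly_fun_cst. Qed.

Lemma poly_on_linesD F G : poly_on_lines F -> poly_on_lines G ->
  poly_on_lines (fun p => F p + G p).
Proof. by move=> PF PG p w; apply: poly_funD. Qed.

Lemma poly_on_linesB F G : poly_on_lines F -> poly_on_lines G ->
  poly_on_lines (fun p => F p - G p).
Proof. by move=> PF PG p w; apply: poly_funB. Qed.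

Lemma poly_on_linesM F G : poly_on_lines F -> poly_on_lines G ->
  poly_on_lines (fun p => F p * G p).
Proof. by move=> PF PG p w; apply: poly_funM. Qed.

Lemma poly_on_lines_scalar F : (forall p w s, F (p + s *: w) = F p + s * F w) ->
  poly_on_lines F.
Proof.
move=> F_lin p w.
have [q qE] := poly_funD (poly_fun_cst (F p)) (poly_funM poly_fun_id (poly_fun_cst (F w))).
by exists q => s; rewrite F_lin qE.
Qed.

(* Restrict [F] and [G] to the line through [p] and a point where [G] does not vanish. *)
Lemma poly_on_lines_mul_eq0 F G : poly_on_lines F -> poly_on_lines G ->
  (forall p, F p * G p = 0) -> F =1 0 \/ G =1 0.
Proof.
move=> PF PG FG0; have [[a Ga]|G0] := pselect (exists a, G a != 0); last first.
  by right=> a; apply: contrapT => /eqP Ga; apply: G0; exists a.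
left=> p; have line0 : p + 0 *: (a - p) = p by rewrite scale0r addr0.
have line1 : p + 1 *: (a - p) = a by rewrite scale1r addrC subrK.
rewrite -line0; apply: (poly_fun_mulIf (s0 := 1) (PF p (a - p)) (PG p (a - p))).
  by rewrite line1.
by move=> s; apply: FG0.
Qed.

End PolynomialFunctions.

Lemma scaled_eq_iff (F : fieldType) (a b a' b' c : F) :
  c != 0 -> a' - b' = (a - b) * c -> a' = b' <-> a = b.
Proof.
move=> c_neq0 scaledE; split=> /eqP; rewrite -subr_eq0 => /eqP E; apply/eqP.
  by move: E; rewrite scaledE => /eqP; rewrite mulf_eq0 (negPf c_neq0) orbF subr_eq0.
by rewrite -subr_eq0 scaledE E mul0r.
Qed.

Definition uncurry4 (T U : Type) (F : T -> T -> T -> T -> U) (p : T * T * T * T) : U :=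
  F p.1.1.1 p.1.1.2 p.1.2 p.2.

Section Quadrilateral.
Variables (R : realType) (Q : Qfun R).
Hypothesis Q_multiaffine : multiaffine Q.

Lemma Q_yE x u v y al be : Q_y Q x u v y al be = Q x u v 1 al be - Q x u v 0 al be.
Proof. by rewrite /Q_y derive1_affine //; case: (Q_multiaffine x u v y al be). Qed.

Lemma Q_uE x u v y al be : Q_u Q x u v y al be = Q x 1 v y al be - Q x 0 v y al be.
Proof. by rewrite /Q_u derive1_affine //; case: (Q_multiaffine x u v y al be). Qed.

Lemma Q_vE x u v y al be : Q_v Q x u v y al be = Q x u 1 y al be - Q x u 0 y al be.
Proof. by rewrite /Q_v derive1_affine //; case: (Q_multiaffine x u v y al be). Qed.

Lemma affine_Q_y_u x v y al be : affine (fun t => Q_y Q x t v y al be).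
Proof.
have [_ [a [b E1]] _ _] := Q_multiaffine x 0 v 1 al be.
have [_ [c [d E0]] _ _] := Q_multiaffine x 0 v 0 al be.
by exists (a - c), (b - d) => t; rewrite Q_yE E1 E0; ring.
Qed.

Lemma affine_Q_y_v x u y al be : affine (fun t => Q_y Q x u t y al be).
Proof.
have [_ _ [a [b E1]] _] := Q_multiaffine x u 0 1 al be.
have [_ _ [c [d E0]] _] := Q_multiaffine x u 0 0 al be.
by exists (a - c), (b - d) => t; rewrite Q_yE E1 E0; ring.
Qed.

Lemma biaffine_Q_vy x u al be : biaffine (fun t s => Q x u t s al be).
Proof.
by split=> [s|t]; [case: (Q_multiaffine x u 0 s al be) | case: (Q_multiaffine x u t 0 al be)].
Qed.

Lemma biaffine_Q_uy x v al be : biaffine (fun t s => Q x t v s al be).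
Proof.
by split=> [s|t]; [case: (Q_multiaffine x 0 v s al be) | case: (Q_multiaffine x t v 0 al be)].
Qed.

Lemma gexprE x u v y al be : gexpr Q x u v y al be = bilin_det (fun t s => Q x u t s al be).
Proof.
have [a [b [c [d QE]]]] := biaffineP (biaffine_Q_vy x u al be).
rewrite /gexpr /Q_yv (derive1_affine (affine_Q_y_v _ _ _ _ _)) !Q_yE Q_vE /bilin_det.
by rewrite !QE; ring.
Qed.

Lemma gexpr_uE x u v y al be : gexpr_u Q x u v y al be = bilin_det (fun t s => Q x t v s al be).
Proof.
have [a [b [c [d QE]]]] := biaffineP (biaffine_Q_uy x v al be).
rewrite /gexpr_u /Q_yu (derive1_affine (affine_Q_y_u _ _ _ _ _)) !Q_yE Q_uE /bilin_det.
by rewrite !QE; ring.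
Qed.

Lemma gE x u al be : g Q x u al be = bilin_det (fun t s => Q x u t s al be).
Proof. exact: gexprE. Qed.

Lemma poly_fun_Q al be l1 l2 l3 l4 :
  poly_fun l1 -> poly_fun l2 -> poly_fun l3 -> poly_fun l4 ->
  poly_fun (fun s => Q (l1 s) (l2 s) (l3 s) (l4 s) al be).
Proof.
move=> P1 P2 P3 P4.
have P1' c2 c3 c4 : poly_fun (fun s => Q (l1 s) c2 c3 c4 al be).
  apply: (@poly_fun_affine_subst _ (fun _ t => Q t c2 c3 c4 al be)) P1 => [s||];
    by [case: (Q_multiaffine 0 c2 c3 c4 al be) | apply: poly_fun_cst].
have P2' c3 c4 : poly_fun (fun s => Q (l1 s) (l2 s) c3 c4 al be).
  apply: (@poly_fun_affine_subst _ (fun s t => Q (l1 s) t c3 c4 al be)) P2 => // s.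
  by case: (Q_multiaffine (l1 s) 0 c3 c4 al be).
have P3' c4 : poly_fun (fun s => Q (l1 s) (l2 s) (l3 s) c4 al be).
  apply: (@poly_fun_affine_subst _ (fun s t => Q (l1 s) (l2 s) t c4 al be)) P3 => // s.
  by case: (Q_multiaffine (l1 s) (l2 s) 0 c4 al be).
apply: (@poly_fun_affine_subst _ (fun s t => Q (l1 s) (l2 s) (l3 s) t al be)) P4 => // s.
by case: (Q_multiaffine (l1 s) (l2 s) (l3 s) 0 al be).
Qed.

Lemma poly_on_lines_Q (V : lmodType R) (F1 F2 F3 F4 : V -> R) al be :
  poly_on_lines F1 -> poly_on_lines F2 -> poly_on_lines F3 -> poly_on_lines F4 ->
  poly_on_lines (fun p => Q (F1 p) (F2 p) (F3 p) (F4 p) al be).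
Proof. by move=> P1 P2 P3 P4 p w; apply: poly_fun_Q. Qed.

Create HintDb poly_on_lines.
#[local] Hint Extern 1 (poly_on_lines _) =>
  first [ apply: poly_on_linesB | apply: poly_on_linesD | apply: poly_on_linesM
        | apply: poly_on_lines_Q | apply: poly_on_lines_cst ] : poly_on_lines.

Lemma poly_on_lines_g (V : lmodType R) (F1 F2 : V -> R) al be :
  poly_on_lines F1 -> poly_on_lines F2 -> poly_on_lines (fun p => g Q (F1 p) (F2 p) al be).
Proof.
move=> P1 P2.
apply: (poly_on_lines_eq (G := fun p => bilin_det (fun t s => Q (F1 p) (F2 p) t s al be))).
  by move=> p; rewrite gE.
by rewrite /bilin_det; auto 20 with poly_on_lines.
Qed.

#[local] Hint Extern 1 (poly_on_lines _) => apply: poly_on_lines_g : poly_on_lines.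
(* Coordinate projections of [R * R * R * R]. *)
#[local] Hint Extern 0 (poly_on_lines _) =>
  solve [apply: poly_on_lines_scalar => //] : poly_on_lines.

Lemma g_sym sig : sig = 1 \/ sig = -1 ->
  (forall x u v y al be, Q x u v y al be = sig * Q u x y v al be) ->
  forall x u al be, g Q x u al be = g Q u x al be.
Proof.
move=> sig_sign Q_swap x u al be; rewrite !gE /bilin_det !(Q_swap u x).
by case: sig_sign => ->; ring.
Qed.

Section FlipSymmetric.
Variable eps : R.
Hypothesis eps_sign : eps = 1 \/ eps = -1.
Hypothesis Q_flip : forall x u v y al be, Q x u v y al be = eps * Q x v u y be al.

Lemma g_flip x v al be : g Q x v be al = bilin_det (fun t s => Q x t v s al be).
Proof.
rewrite gE /bilin_det !(Q_flip x v).
by case: eps_sign => ->; ring.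
Qed.

Lemma g_eq0_of_Q_y_eq0 al be : (forall x u v, Q_y Q x u v 0 al be = 0) ->
  (forall x u, g Q x u al be = 0) /\ (forall x u, g Q x u be al = 0).
Proof.
move=> Q_y0; have Q1E x u v : Q x u v 1 al be = Q x u v 0 al be.
  by apply/eqP; rewrite -subr_eq0 -(Q_yE _ _ _ 0) Q_y0.
by split=> x u; [rewrite gE | rewrite g_flip]; rewrite /bilin_det !Q1E; ring.
Qed.

Lemma derive1_solution al be (f : R -> R -> R -> R) :
  (forall x u v, Q_y Q x u v 0 al be != 0 -> forall z, Q x u v z al be = 0 <-> z = f x u v) ->
  forall x u v, Q_y Q x u v 0 al be != 0 ->
  derive1 (fun t => f x u t) v = g Q x u al be / Q_y Q x u v 0 al be ^+ 2 /\
  derive1 (fun t => f x t v) u = g Q x v be al / Q_y Q x u v 0 al be ^+ 2.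
Proof.
move=> f_root x u v nz; rewrite gE g_flip Q_yE; rewrite Q_yE in nz; split.
- apply: derive1_implicit_biaffine (biaffine_Q_vy x u al be) _ nz => t nz_t.
  by apply/(f_root x u t _ _).2; rewrite ?Q_yE.
- apply: derive1_implicit_biaffine (biaffine_Q_uy x v al be) _ nz => t nz_t.
  by apply/(f_root x t v _ _).2; rewrite ?Q_yE.
Qed.

Lemma derive_cycle_iff_g_cycle a1 a2 a3 (f1 f2 f3 : R -> R -> R -> R) :
  (forall x x2 x3, Q_y Q x x2 x3 0 a2 a3 != 0 ->
     forall z, Q x x2 x3 z a2 a3 = 0 <-> z = f1 x x2 x3) ->
  (forall x x3 x1, Q_y Q x x3 x1 0 a3 a1 != 0 ->
     forall z, Q x x3 x1 z a3 a1 = 0 <-> z = f2 x x3 x1) ->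
  (forall x x1 x2, Q_y Q x x1 x2 0 a1 a2 != 0 ->
     forall z, Q x x1 x2 z a1 a2 = 0 <-> z = f3 x x1 x2) ->
  forall x x1 x2 x3,
    Q_y Q x x2 x3 0 a2 a3 != 0 -> Q_y Q x x3 x1 0 a3 a1 != 0 ->
    Q_y Q x x1 x2 0 a1 a2 != 0 ->
    derive1 (fun t => f3 x x1 t) x2 * derive1 (fun t => f2 x x3 t) x1
      * derive1 (fun t => f1 x x2 t) x3
    = - (derive1 (fun t => f3 x t x2) x1 * derive1 (fun t => f2 x t x1) x3
         * derive1 (fun t => f1 x t x3) x2)
    <->
    g Q x x1 a1 a2 * g Q x x2 a2 a3 * g Q x x3 a3 a1
    = - (g Q x x1 a1 a3 * g Q x x2 a2 a1 * g Q x x3 a3 a2).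
Proof.
move=> f1_root f2_root f3_root x x1 x2 x3 nz1 nz2 nz3.
have [-> ->] := derive1_solution f1_root nz1.
have [-> ->] := derive1_solution f2_root nz2.
have [-> ->] := derive1_solution f3_root nz3.
set B1 := Q_y Q x x2 x3 0 a2 a3; set B2 := Q_y Q x x3 x1 0 a3 a1.
set B3 := Q_y Q x x1 x2 0 a1 a2; set c := (B1 * B2 * B3) ^- 2.
have c_neq0 : c != 0 by rewrite invr_eq0 expf_neq0 // !mulf_neq0.
by apply: scaled_eq_iff c_neq0 _; rewrite /c; field; rewrite nz1 nz2 nz3.
Qed.

Lemma g_cycle_of_generic a1 a2 a3 :
  (forall x x1 x2 x3,
     Q_y Q x x2 x3 0 a2 a3 != 0 -> Q_y Q x x3 x1 0 a3 a1 != 0 ->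
     Q_y Q x x1 x2 0 a1 a2 != 0 ->
     g Q x x1 a1 a2 * g Q x x2 a2 a3 * g Q x x3 a3 a1
     = - (g Q x x1 a1 a3 * g Q x x2 a2 a1 * g Q x x3 a3 a2)) ->
  forall x x1 x2 x3,
    g Q x x1 a1 a2 * g Q x x2 a2 a3 * g Q x x3 a3 a1
    = - (g Q x x1 a1 a3 * g Q x x2 a2 a1 * g Q x x3 a3 a2).
Proof.
move=> generic x x1 x2 x3; apply/eqP; rewrite -addr_eq0; apply/eqP.
pose H := uncurry4 (fun x x1 x2 x3 => g Q x x1 a1 a2 * g Q x x2 a2 a3 * g Q x x3 a3 a1
                                     + g Q x x1 a1 a3 * g Q x x2 a2 a1 * g Q x x3 a3 a2).
pose B1 := uncurry4 (fun x _ x2 x3 => Q x x2 x3 1 a2 a3 - Q x x2 x3 0 a2 a3).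
pose B2 := uncurry4 (fun x x1 _ x3 => Q x x3 x1 1 a3 a1 - Q x x3 x1 0 a3 a1).
pose B3 := uncurry4 (fun x x1 x2 _ => Q x x1 x2 1 a1 a2 - Q x x1 x2 0 a1 a2).
have PH : poly_on_lines H by rewrite /H /uncurry4; auto 20 with poly_on_lines.
have PB1 : poly_on_lines B1 by rewrite /B1 /uncurry4; auto 20 with poly_on_lines.
have PB2 : poly_on_lines B2 by rewrite /B2 /uncurry4; auto 20 with poly_on_lines.
have PB3 : poly_on_lines B3 by rewrite /B3 /uncurry4; auto 20 with poly_on_lines.
have HB0 p : H p * (B1 p * B2 p * B3 p) = 0.
  have [->|] := eqVneq (B1 p * B2 p * B3 p) 0; first by rewrite mulr0.
  case: p => [[[y y1] y2] y3]; rewrite /H /B1 /B2 /B3 /uncurry4 /= -!(Q_yE _ _ _ 0).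
  rewrite !mulf_eq0 !negb_or => /andP[/andP[nz1 nz2] nz3].
  by rewrite (generic _ _ _ _ nz1 nz2 nz3) addNr mul0r.
have [H0|] := poly_on_lines_mul_eq0 PH (poly_on_linesM (poly_on_linesM PB1 PB2) PB3) HB0.
  exact: (H0 (x, x1, x2, x3)).
case/(poly_on_lines_mul_eq0 (poly_on_linesM PB1 PB2) PB3) => [|B3_0].
  case/(poly_on_lines_mul_eq0 PB1 PB2) => [B1_0|B2_0].
  - have Q_y0 y u v : Q_y Q y u v 0 a2 a3 = 0 by rewrite Q_yE; apply: (B1_0 (y, 0, u, v)).
    by have [-> ->] := g_eq0_of_Q_y_eq0 Q_y0; rewrite !(mulr0, mul0r) addr0.
  - have Q_y0 y u v : Q_y Q y u v 0 a3 a1 = 0 by rewrite Q_yE; apply: (B2_0 (y, v, 0, u)).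
    by have [-> ->] := g_eq0_of_Q_y_eq0 Q_y0; rewrite !(mulr0, mul0r) addr0.
have Q_y0 y u v : Q_y Q y u v 0 a1 a2 = 0 by rewrite Q_yE; apply: (B3_0 (y, u, v, 0)).
by have [-> ->] := g_eq0_of_Q_y_eq0 Q_y0; rewrite !(mulr0, mul0r) addr0.
Qed.

End FlipSymmetric.

End Quadrilateral.

Theorem proposition2 (R : realType) (Q : Qfun R) (eps sig : R) :
  multiaffine Q ->
  (eps = 1 \/ eps = -1) -> (sig = 1 \/ sig = -1) ->
  (forall x u v y al be, Q x u v y al be = eps * Q x v u y be al) ->
  (forall x u v y al be, Q x u v y al be = sig * Q u x y v al be) ->
  [/\ (* g is independent of v, y *)
      (forall x u v y al be, gexpr Q x u v y al be = g Q x u al be),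
      (* g(x,v;be,al) = Q Q_yu - Q_y Q_u *)
      (forall x u v y al be, g Q x v be al = gexpr_u Q x u v y al be),
      (* g(x,u;al,be) = g(u,x;al,be) *)
      (forall x u al be, g Q x u al be = g Q u x al be) &
      forall (a1 a2 a3 : R) (f1 f2 f3 : R -> R -> R -> R),
        (* x23 = f1(x,x2,x3) is the solution of Q(x,x2,x3,x23;a2,a3) = 0 *)
        (forall x x2 x3, Q_y Q x x2 x3 0 a2 a3 != 0 ->
           forall z, Q x x2 x3 z a2 a3 = 0 <-> z = f1 x x2 x3) ->
        (* x31 = f2(x,x3,x1) is the solution of Q(x,x3,x1,x31;a3,a1) = 0 *)
        (forall x x3 x1, Q_y Q x x3 x1 0 a3 a1 != 0 ->
           forall z, Q x x3 x1 z a3 a1 = 0 <-> z = f2 x x3 x1) ->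
        (* x12 = f3(x,x1,x2) is the solution of Q(x,x1,x2,x12;a1,a2) = 0 *)
        (forall x x1 x2, Q_y Q x x1 x2 0 a1 a2 != 0 ->
           forall z, Q x x1 x2 z a1 a2 = 0 <-> z = f3 x x1 x2) ->
        ((forall x x1 x2 x3,
            Q_y Q x x2 x3 0 a2 a3 != 0 -> Q_y Q x x3 x1 0 a3 a1 != 0 ->
            Q_y Q x x1 x2 0 a1 a2 != 0 ->
            derive1 (fun t => f3 x x1 t) x2 * derive1 (fun t => f2 x x3 t) x1
              * derive1 (fun t => f1 x x2 t) x3
            = - (derive1 (fun t => f3 x t x2) x1 * derive1 (fun t => f2 x t x1) x3
                 * derive1 (fun t => f1 x t x3) x2))
         <->
         (forall x x1 x2 x3,
            g Q x x1 a1 a2 * g Q x x2 a2 a3 * g Q x x3 a3 a1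
            = - (g Q x x1 a1 a3 * g Q x x2 a2 a1 * g Q x x3 a3 a2)))].
Proof.
move=> Q_multiaffine eps_sign sig_sign Q_flip Q_swap; split.
- by move=> x u v y al be; rewrite gexprE // gE.
- by move=> x u v y al be; rewrite gexpr_uE // (g_flip Q_multiaffine eps_sign Q_flip).
- exact: g_sym sig_sign Q_swap.
move=> a1 a2 a3 f1 f2 f3 f1_root f2_root f3_root.
have cycle_iff := derive_cycle_iff_g_cycle Q_multiaffine eps_sign Q_flip f1_root f2_root f3_root.
split=> [derive_cycle|g_cycle x x1 x2 x3 nz1 nz2 nz3].
  apply: (g_cycle_of_generic Q_multiaffine eps_sign Q_flip) => x x1 x2 x3 nz1 nz2 nz3.
  by apply/(cycle_iff _ _ _ _ nz1 nz2 nz3)/derive_cycle.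
by apply/(cycle_iff _ _ _ _ nz1 nz2 nz3)/g_cycle.
Qed.
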